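(* Let $d\ge 1$ and $\delta>0$, and let $\mathcal{W}$ and $\mathcal{N}$ be the sets of trees defined in the context. Then $\mathcal{W}$ and $\mathcal{N}$ are both finite sets.
   Context: Trees are formal symbols. The set $\widehat{\mathcal{T}}_r$ is the smallest set containing the generators $\mathbf{1},\mathbf{X}_1,\dots,\mathbf{X}_d,\Xi$ and such that whenever $\tau_1,\tau_2,\tau_3\in\widehat{\mathcal{T}}_r$, the formal expression $\mathcal{I}(\tau_1)\mathcal{I}(\tau_2)\mathcal{I}(\tau_3)$ (a non-commutative ''tree product'' of the three ''planted trees'' $\mathcal{I}(\tau_k)$; different orderings of the factors give different trees) belongs to $\widehat{\mathcal{T}}_r$. The order $|\cdot|$ of a tree is defined recursively by $|\mathbf{1}|=-2$, $|\mathbf{X}_i|=-1$ for $1\le i\le d$, $|\Xi|=-3+\delta$, $|\mathcal{I}(\tau_1)\mathcal{I}(\tau_2)\mathcal{I}(\tau_3)|=6+|\tau_1|+|\tau_2|+|\tau_3|$ (and $|\mathcal{I}(\tau)|=|\tau|+2$ for planted trees). Define $\mathcal{W}=\{\tau\in\widehat{\mathcal{T}}_r:\ |\tau|<-2\}$ and $\mathcal{N}=\{\tau\in\widehat{\mathcal{T}}_r:\ -2\le|\tau|\le 0\}$. *)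

From Stdlib Require Fin.
From Stdlib Require Import Reals Ensembles Finite_sets.
Open Scope R_scope.

(* Trees of \hat T_r, with d noise-free coordinate symbols X_1..X_d
   (indexed by Fin.t d, i.e. i = 1..d). *)
Inductive tree (d : nat) : Type :=
| One : tree d
| X : Fin.t d -> tree d
| Xi : tree d
| Node : tree d -> tree d -> tree d -> tree d.
(* Node t1 t2 t3 represents the ordered product I(t1) I(t2) I(t3). *)

Arguments One {d}. Arguments X {d} _. Arguments Xi {d}. Arguments Node {d} _ _ _.

Fixpoint order {d : nat} (delta : R) (t : tree d) : R :=
  match t with
  | One => -2
  | X _ => -1
  | Xi => -3 + delta
  | Node t1 t2 t3 => 6 + order delta t1 + order delta t2 + order delta t3
  end.

Definition W (d : nat) (delta : R) : Ensemble (tree d) :=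
  fun t => order delta t < -2.

Definition Nset (d : nat) (delta : R) : Ensemble (tree d) :=
  fun t => -2 <= order delta t <= 0.

(** The quantity [order delta t + 3] is additive over the three subtrees of a
    node and is at least [min 1 delta > 0] on every leaf.  A tree with [n]
    nodes has [2n + 1] leaves, so a bound on the order bounds the number of
    nodes, and there are only finitely many trees with a bounded number of
    nodes over the finite alphabet [1, X_1, ..., X_d, Xi]. *)

From Stdlib Require Fin FinFun.
From Stdlib Require Import Reals Ensembles Finite_sets.
From Stdlib Require Import Finite_sets_facts List Lra Lia.
Open Scope R_scope.

Lemma Finite_In_list {U : Type} (l : list U) : Finite U (fun x => List.In x l).
Proof.
  induction l as [|a l IHl].
  - apply Finite_downward_closed with (A := Empty_set U); [constructor|].
    intros x [].
  - apply Finite_downward_closed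
      with (A := Ensembles.Add U (fun x => List.In x l) a).
    + now apply Add_preserves_Finite.
    + intros x [<-|Hx]; [right; constructor | now left].
Qed.

Section TreeEnumeration.

Variable d : nat.

Fixpoint size (t : tree d) : nat :=
  match t with
  | Node t1 t2 t3 => S (size t1 + size t2 + size t3)
  | _ => 0%nat
  end.

Variable labels : list (Fin.t d).

Fixpoint trees_upto (k : nat) : list (tree d) :=
  One :: Xi :: map X labels ++
  match k with
  | O => nil
  | S k' =>
      let l := trees_upto k' in
      flat_map (fun a => flat_map (fun b => map (Node a b) l) l) l
  end.

Hypothesis labels_full : FinFun.Full labels.

Lemma In_trees_upto (t : tree d) (k : nat) :
  (size t <= k)%nat -> List.In t (trees_upto k).
Proof.
  revert k; induction t as [| i | | t1 IH1 t2 IH2 t3 IH3]; intros k Hk;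
    destruct k as [|k]; simpl in Hk |- *; try lia.
  1,2: now left.
  1,2: right; right; apply in_or_app; left; apply in_map, labels_full.
  1,2: now right; left.
  right; right; apply in_or_app; right.
  apply in_flat_map; exists t1; split; [apply IH1; lia|].
  apply in_flat_map; exists t2; split; [apply IH2; lia|].
  apply in_map, IH3; lia.
Qed.

End TreeEnumeration.

Arguments size {d} t.
Arguments trees_upto {d} labels k.

Lemma size_le_finite (d k : nat) :
  Finite (tree d) (fun t : tree d => (size t <= k)%nat).
Proof.
  destruct (FinFun.Fin_Finite d) as [labels labels_full].
  apply Finite_downward_closed
    with (A := fun t => List.In t (trees_upto labels k)).
  - apply Finite_In_list.
  - intros t Ht; now apply In_trees_upto.
Qed.

Lemma order_ge_size (d : nat) (delta e : R) (t : tree d) :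
  e <= 1 -> e <= delta -> e * INR (2 * size t + 1) <= order delta t + 3.
Proof.
  intros He1 Hedelta.
  induction t as [| i | | t1 IH1 t2 IH2 t3 IH3]; simpl order; simpl size;
    try (change (INR (2 * 0 + 1)) with 1; lra).
  replace (2 * S (size t1 + size t2 + size t3) + 1)%nat
    with ((2 * size t1 + 1) + (2 * size t2 + 1) + (2 * size t3 + 1))%nat
    by lia.
  set (n1 := (2 * size t1 + 1)%nat) in *.
  set (n2 := (2 * size t2 + 1)%nat) in *.
  set (n3 := (2 * size t3 + 1)%nat) in *.
  rewrite !plus_INR, !Rmult_plus_distr_l; lra.
Qed.

Lemma order_le_finite (d : nat) (delta c : R) :
  0 < delta -> Finite (tree d) (fun t => order delta t <= c).
Proof.
  intros Hdelta.
  set (e := Rmin 1 delta).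
  assert (He : 0 < e) by (apply Rmin_glb_lt; lra).
  destruct (INR_archimed e (c + 3) He) as [N HN].
  apply Finite_downward_closed with (A := fun t : tree d => (size t <= N)%nat).
  - apply size_le_finite.
  - intros t Ht; unfold Ensembles.In in Ht |- *.
    pose proof (order_ge_size d delta e t (Rmin_l 1 delta) (Rmin_r 1 delta)).
    assert (Hsize : INR (2 * size t + 1) < INR N).
    { apply Rmult_lt_reg_r with e; lra. }
    apply INR_lt in Hsize; lia.
Qed.

Theorem lemma3p3 (d : nat) (delta : R) (hd : (1 <= d)%nat) (hdelta : 0 < delta) :
  Finite (tree d) (W d delta) /\ Finite (tree d) (Nset d delta).
Proof.
  split; apply Finite_downward_closed with (A := fun t => order delta t <= 0);
    try (now apply order_le_finite);
    intros t Ht; unfold Ensembles.In, W, Nset in *; lra.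
Qed.
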